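(* Let $t \ge 3$ be an integer and let $G$ be a block graph. Then $\mathrm{CF}_t(G)$ is $(t-2)$-decomposable and hence shellable.
   Context: All graphs are finite and simple. A block of a graph is a maximal connected subgraph that remains connected after removal of any single vertex; $G$ is a block graph if every block is a complete graph. $\mathrm{CF}_t(G)$ is the simplicial complex on $V(G)$ whose faces are the subsets $A\subseteq V(G)$ such that $G[A]$ contains no clique on $t$ vertices. For a simplicial complex $\Delta$ on $V$ and a face $F$: $\operatorname{link}_\Delta(F) = \{F' : F'\cap F=\emptyset, F'\cup F\in\Delta\}$, $\Delta\setminus F = \{H\in\Delta : H\cap F=\emptyset\}$, $\dim F=|F|-1$. A face $\sigma$ is a shedding face if for every $\tau\in\Delta$ with $\sigma\subseteq\tau$ and every $v\in\sigma$ there is $w\in V\setminus\tau$ with $(\tau\cup\{w\})\setminus\{v\}\in\Delta$. $\Delta$ is $k$-decomposable if it is a simplex (including $\emptyset$, $\{\emptyset\}$) or has a shedding face $\sigma$ with $\dim\sigma\le k$ such that $\Delta\setminus\sigma$ and $\operatorname{link}_\Delta(\sigma)$ are $k$-decomposable. $\Delta$ is shellable if its facets admit an order $F_1,\dots,F_s$ such that for all $i<j$ there exist $v\in F_j\setminus F_i$ and $\ell<j$ with $F_j\setminus F_\ell=\{v\}$. *)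

(* A finite simple graph is a symmetric irreflexive relation
   e on a finType T (vertex set = all of T). Simplicial complexes on V(G)=T are
   represented by their set of faces : {set {set T}}. *)
From mathcomp Require Import all_boot.
Set Implicit Arguments. Unset Strict Implicit. Unset Printing Implicit Defensive.

Section Defs.
Variable T : finType.

Variable e : rel T.

(* the induced subgraph G[S] is connected (the empty graph counts as connected) *)
Definition induced_connected (S : {set T}) : bool :=
  [forall x in S, forall y in S,
     connect [rel a b | [&& e a b, a \in S & b \in S]] x y].

Definition block_like (S : {set T}) : bool :=
  induced_connected S && [forall v in S, induced_connected (S :\ v)].

(* blocks: maximal such subgraphs (maximal ones are automatically induced) *)
Definition is_block (S : {set T}) : bool :=
  block_like S && [forall S' : {set T}, (S \subset S') && block_like S' ==> (S' == S)].

Definition clique (S : {set T}) : bool :=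
  [forall x in S, forall y in S, (x != y) ==> e x y].

Definition block_graph : Prop := forall S : {set T}, is_block S -> clique S.

Definition CF (t : nat) : {set {set T}} :=
  [set A : {set T} | ~~ [exists B : {set T}, [&& B \subset A, #|B| == t & clique B]]].

End Defs.

Section Complexes.
Variable T : finType.
Implicit Types (D : {set {set T}}) (F : {set T}).

Definition link D F : {set {set T}} :=
  [set F' : {set T} | [disjoint F' & F] && (F' :|: F \in D)].

Definition deletion D F : {set {set T}} :=
  [set H in D | [disjoint H & F]].

(* simplex, including the void complex and {emptyset} *)
Definition is_simplex D : Prop := D = set0 \/ exists F, D = powerset F.

Definition shedding_face D (sigma : {set T}) : Prop :=
  sigma \in D /\
  forall tau : {set T}, tau \in D -> sigma \subset tau ->
  forall v, v \in sigma -> exists2 w : T, w \notin tau & (w |: tau) :\ v \in D.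

(* dim sigma <= k  <->  #|sigma| <= k+1 *)
Inductive k_decomposable (k : nat) : {set {set T}} -> Prop :=
| kdec_simplex D : is_simplex D -> k_decomposable k D
| kdec_shed D sigma : shedding_face D sigma -> #|sigma| <= k.+1 ->
    k_decomposable k (deletion D sigma) -> k_decomposable k (link D sigma) ->
    k_decomposable k D.

Definition facets D : {set {set T}} :=
  [set F in D | [forall G in D, (F \subset G) ==> (G == F)]].

Definition shellable D : Prop :=
  exists s : seq {set T}, perm_eq s (enum (facets D)) /\
    forall i j, i < j -> j < size s ->
      exists2 v, v \in nth set0 s j :\: nth set0 s i &
        exists2 l, l < j & nth set0 s j :\: nth set0 s l = [set v].

End Complexes.

From mathcomp Require Import all_boot zify.
Set Implicit Arguments. Unset Strict Implicit. Unset Printing Implicit Defensive.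

(* Every t-clique of a block graph lies in a block, and the blocks carrying the
   t-cliques of an induced subgraph are arranged like a tree. A leaf Q of this
   tree is a clique whose vertices, except the cut vertex attaching it, lie in no
   t-clique outside Q. Taking x to be that cut vertex when it is still a vertex
   of the complex (any vertex of Q otherwise), x is a shedding vertex of CF_t: a
   face through x can trade x for a vertex of Q it misses. Deletion and link of
   x are again links of faces of CF_t of induced subgraphs, on fewer vertices,
   so CF_t(G) is vertex decomposable; this gives (t-2)-decomposability and a
   shelling at once. *)

Definition adj_in (T : finType) (e : rel T) (Y : {set T}) : rel T :=
  fun a b => [&& e a b, a \in Y & b \in Y].
Arguments adj_in {T} e Y a b /.

Section InducedConnectivity.
Variables (T : finType) (e : rel T).
Hypothesis e_sym : symmetric e.
Implicit Types (X Y : {set T}) (a b c : T).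

Lemma adj_in_sym Y : symmetric (adj_in e Y).
Proof. by move=> a b; rewrite /= e_sym; congr andb; rewrite andbC. Qed.

Lemma connect_adj_inC Y a b : connect (adj_in e Y) a b = connect (adj_in e Y) b a.
Proof. exact/sym_connect_sym/adj_in_sym. Qed.

Lemma connect_adj_inS X Y a b :
  X \subset Y -> connect (adj_in e X) a b -> connect (adj_in e Y) a b.
Proof.
move=> sXY; apply: connect_sub => x y /and3P[exy xX yX]; apply: connect1.
by rewrite /= exy !(subsetP sXY).
Qed.

Lemma path_adj_in Y a p : all [in Y] (a :: p) -> path e a p -> path (adj_in e Y) a p.
Proof. by apply: sub_in_path => x y xY yY /= ->; rewrite xY yY. Qed.

Lemma path_adj_inD1 Y a p c :
  c \notin a :: p -> path (adj_in e Y) a p -> path (adj_in e (Y :\ c)) a p.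
Proof.
move=> c_notin; apply: (@sub_in_path _ (predC1 c)).
  by move=> x y; rewrite !inE => xc yc /and3P[exy xY yY]; rewrite /= !inE exy xc yc xY yY.
by apply/allP => x /= xp; apply: contraNneq c_notin => <-.
Qed.

Lemma path_adj_in_mem Y a p : path (adj_in e Y) a p -> {subset p <= Y}.
Proof.
elim: p a => [|b p IHp] a //= /andP[/and3P[_ _ bY] b_p] y.
by rewrite inE => /predU1P[-> // | /(IHp _ b_p)].
Qed.

Lemma connect_adj_in_out Y a b : a \notin Y -> connect (adj_in e Y) a b -> b = a.
Proof. by move=> aY /connectP[[|c p] //= /andP[/and3P[_ aY' _]]]; rewrite aY' in aY. Qed.

(* If c lies on every a-b path inside Y, then the part of a shortest a-b path
   before c avoids b. *)
Lemma connect_cut Y a b c :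
  connect (adj_in e Y) a b -> ~~ connect (adj_in e (Y :\ c)) a b -> b != c ->
  connect (adj_in e (Y :\ b)) a c.
Proof.
case/connectP=> p /shortenP[q a_q uniq_aq _ ->{b p}] not_ac last_c.
have [->|ca] := eqVneq c a; first exact: connect0.
have c_in : c \in q.
  apply: contraNT not_ac => c_notin; apply/connectP; exists q => //.
  by apply: path_adj_inD1 a_q; rewrite inE negb_or ca.
case/splitPr: c_in a_q uniq_aq last_c not_ac => p1 p2 a_q uniq_aq.
rewrite last_cat /= => last_c _.
have last_p2 : last c p2 \in c :: p2 := mem_last c p2.
apply/connectP; exists (rcons p1 c); last by rewrite last_rcons.
apply: path_adj_inD1; last by move: a_q; rewrite cat_path rcons_path /= => /and3P[-> ->].
move: uniq_aq; rewrite -cat_cons cat_uniq => /and3P[_ /hasPn/(_ _ last_p2) b_notin _].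
by rewrite -rcons_cons mem_rcons inE negb_or last_c.
Qed.

End InducedConnectivity.

Section BlockGraphs.
Variables (T : finType) (e : rel T).
Hypotheses (e_sym : symmetric e) (e_irr : irreflexive e) (e_block : block_graph e).
Implicit Types (X Y S C : {set T}) (a b v : T).

Lemma cliqueP S : reflect {in S &, forall a b, a != b -> e a b} (clique e S).
Proof.
apply: (iffP forall_inP) => [S_cl a b aS bS | S_cl a aS].
  by move/forall_inP/(_ b bS)/implyP: (S_cl a aS).
by apply/forall_inP => b bS; apply/implyP; apply: S_cl.
Qed.

Lemma clique_subset S C : S \subset C -> clique e C -> clique e S.
Proof.
by move=> sSC /cliqueP C_cl; apply/cliqueP => a b aS bS; apply: C_cl; apply: (subsetP sSC).
Qed.

Lemma induced_connectedP S :
  {in S &, forall a b, connect (adj_in e S) a b} -> induced_connected e S.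
Proof.
by move=> S_conn; apply/forall_inP => a aS; apply/forall_inP => b bS; apply: S_conn.
Qed.

Lemma sorted_induced_connected s : sorted e s -> induced_connected e [set x in s].
Proof.
case: s => [|a p] a_p; apply: induced_connectedP => x y; rewrite !inE // => xs ys.
have a_p' : path (adj_in e [set x in a :: p]) a p.
  by apply: path_adj_in a_p; apply/allP => z; rewrite inE.
apply: (connect_trans (y := a)); last exact: path_connect a_p' _ ys.
by rewrite connect_adj_inC //; apply: path_connect a_p' _ xs.
Qed.

Lemma cycle_block_like c : uniq c -> cycle e c -> block_like e [set x in c].
Proof.
move=> c_uniq c_cycle; apply/andP; split.
  apply: sorted_induced_connected; case: c c_cycle {c_uniq} => //= a p.
  by rewrite rcons_path => /andP[].
apply/forall_inP => v; rewrite inE => vc.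
move: (rot_uniq (index v c) c) (mem_rot (index v c) c) (rot_cycle (index v c) e c).
rewrite rot_index // c_uniq c_cycle; move: (drop _ _ ++ _) => q /andP[v_q _] q_mem.
rewrite /= rcons_path => /andP[/path_sorted q_sorted _].
have -> : [set x in c] :\ v = [set x in q].
  apply/setP => x; rewrite !inE -q_mem inE.
  by case: eqVneq => [-> | //]; rewrite (negbTE v_q).
exact: sorted_induced_connected.
Qed.

Lemma block_like_sub_block C : block_like e C -> exists2 B, is_block e B & C \subset B.
Proof.
move=> C_bl; have C_ok : (C \subset C) && block_like e C by rewrite subxx C_bl.
case: (@arg_maxnP _ C (fun B => (C \subset B) && block_like e B) (fun B => #|B|) C_ok).
move=> B /andP[sCB B_bl] B_max; exists B => //; rewrite /is_block B_bl.
apply/forallP => B'; apply/implyP => /andP[sBB' B'_bl].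
by rewrite eq_sym eqEcard sBB'; apply: B_max; rewrite (subset_trans sCB sBB').
Qed.

Lemma block_graph_chord Y v a b : v \notin Y -> e v a -> e v b -> a != b ->
  connect (adj_in e Y) a b -> e a b.
Proof.
move=> vY va vb ab /connectP[p /shortenP[q a_q uniq_aq _] b_last].
have v_notin : v \notin a :: q.
  rewrite inE negb_or; apply/andP; split.
    by apply: contraTneq va => ->; rewrite e_irr.
  by apply/negP => /(path_adj_in_mem a_q); apply/negP.
have [B /e_block/cliqueP B_cl sub] :
    exists2 B, is_block e B & [set x in v :: a :: q] \subset B.
  apply/block_like_sub_block/cycle_block_like; first by rewrite cons_uniq v_notin.
  rewrite /= va rcons_path -b_last e_sym vb andbT.
  by apply: sub_path a_q => x y /and3P[].
apply: B_cl ab; apply: (subsetP sub); rewrite inE.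
  by rewrite !inE eqxx orbT.
by rewrite b_last inE orbC mem_last.
Qed.

End BlockGraphs.

Section CutVertices.
Variables (T : finType) (e : rel T).
Hypotheses (e_sym : symmetric e) (e_irr : irreflexive e) (e_block : block_graph e).
Variables (P X : {set T}) (r : T).
Implicit Types (a b u y z : T).

Definition cut_off u : {set T} :=
  [set y in P | [&& connect (adj_in e X) r y, y != u & ~~ connect (adj_in e (X :\ u)) r y]].

Lemma cut_off_subset u z : z \in cut_off u -> cut_off z \subset cut_off u.
Proof.
rewrite inE => /andP[_ /and3P[_ zu not_rz]].
apply/subsetP => y; rewrite !inE => /andP[-> /and3P[ry yz not_ry]]; rewrite ry /=.
have yu : y != u.
  apply: contraNneq not_rz => yu; rewrite yu in ry not_ry.
  by apply: connect_cut ry not_ry _; rewrite eq_sym.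
rewrite yu; apply: contra not_rz => r_y.
have not_ry' : ~~ connect (adj_in e (X :\ u :\ z)) r y.
  by apply: contra not_ry; apply: connect_adj_inS; apply/setSD/subD1set.
by apply: connect_adj_inS (connect_cut r_y not_ry' yz); apply: subD1set.
Qed.

Lemma exists_minimal_cut u0 : cut_off u0 != set0 ->
  exists u, cut_off u != set0 /\ {in cut_off u, forall z, cut_off z = set0}.
Proof.
move=> u0_cuts.
case: (@arg_minnP _ u0 (fun u => cut_off u != set0) (fun u => #|cut_off u|) u0_cuts).
move=> u u_cuts u_min; exists u; split => // z zu; apply/eqP; apply: contraT => z_cuts.
have : cut_off z \proper cut_off u.
  apply/properP; split; first exact: cut_off_subset.
  by exists z => //; rewrite !inE eqxx /= !andbF.
by move/proper_card; rewrite ltnNge u_min.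
Qed.

Lemma noncut_simplicial y a b : connect (adj_in e X) r y -> cut_off y = set0 ->
  a \in P -> b \in P -> adj_in e X y a -> adj_in e X y b -> a != b -> e a b.
Proof.
move=> ry y_noncut aP bP ya yb ab.
have r_avoids_y c : c \in P -> adj_in e X y c -> connect (adj_in e (X :\ y)) r c.
  move=> cP yc; apply: contraT => not_rc.
  suff : c \in cut_off y by rewrite y_noncut inE.
  rewrite inE cP (connect_trans ry (connect1 yc)) not_rc andbT /=.
  by apply: contraTneq yc => ->; rewrite /= e_irr.
apply: (@block_graph_chord _ _ e_sym e_irr e_block (X :\ y) y) ab _.
- by rewrite !inE eqxx.
- by case/and3P: ya.
- by case/and3P: yb.
apply: (connect_trans (y := r)); last exact: r_avoids_y.
by rewrite connect_adj_inC //; apply: r_avoids_y.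
Qed.

End CutVertices.

Section TCliques.
Variables (T : finType) (e : rel T) (t : nat).
Hypotheses (e_sym : symmetric e) (e_irr : irreflexive e) (e_block : block_graph e).
Hypothesis t_gt1 : 1 < t.
Implicit Types (X K : {set T}) (a b k y z : T).

Definition tclique K := (#|K| == t) && clique e K.

Definition tlinked X a b :=
  [exists K : {set T}, [&& K \subset X, tclique K, a \in K & b \in K]].

Definition tclique_vertices X := [set y | tlinked X y y].

Definition tclass X z := [set k | tlinked X z k].

Lemma tlinkedP X a b :
  reflect (exists K : {set T}, [/\ K \subset X, tclique K, a \in K & b \in K]) (tlinked X a b).
Proof.
apply: (iffP existsP) => [[K /and4P[sKX K_tcl aK bK]] | [K [sKX K_tcl aK bK]]];
  by exists K; rewrite ?sKX ?K_tcl ?aK ?bK.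
Qed.

Lemma tlinkedC X a b : tlinked X a b = tlinked X b a.
Proof. by apply/tlinkedP/tlinkedP => -[K [sKX K_tcl aK bK]]; exists K. Qed.

Lemma tlinked_refl X a b : tlinked X a b -> tlinked X b b.
Proof. by case/tlinkedP => K [sKX K_tcl _ bK]; apply/tlinkedP; exists K. Qed.

Lemma tlinked_adj_in X a b : tlinked X a b -> a != b -> adj_in e X a b.
Proof.
case/tlinkedP => K [sKX /andP[_ /cliqueP K_cl] aK bK] ab.
by rewrite /= K_cl // !(subsetP sKX).
Qed.

Lemma tlinked_extend X K z k : K \subset X -> tclique K -> z \in X ->
  {in K, forall k', k' != z -> e z k'} -> k \in K -> tlinked X z k.
Proof.
move=> sKX K_tcl zX zK_adj kK; case/andP: (K_tcl) => /eqP K_card /cliqueP K_cl.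
have [zK | z_notin] := boolP (z \in K); first by apply/tlinkedP; exists K.
have [k' k'K k'k] : exists2 k', k' \in K & k' != k.
  have /card_gt1P[a [b [aK bK ab]]] : 1 < #|K| by rewrite K_card.
  by have [ak | ] := eqVneq a k; [exists b; rewrite // -ak eq_sym | exists a].
apply/tlinkedP; exists (z |: (K :\ k')); split.
- by rewrite subUset sub1set zX (subset_trans (subD1set _ _)).
- rewrite /tclique cardsU1 !inE negb_and z_notin orbT /=.
  rewrite -K_card (cardsD1 k' K) k'K eqxx /=.
  apply/cliqueP => a b; rewrite !inE => /predU1P[-> | /andP[_ aK]] /predU1P[-> | /andP[_ bK]].
  + by rewrite eqxx.
  + by move=> _; apply: zK_adj; last by apply: contraNneq z_notin => <-.
  + by move=> _; rewrite e_sym; apply: zK_adj; last by apply: contraNneq z_notin => <-.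
  + exact: K_cl.
- exact: setU11.
- by rewrite !inE kK (eq_sym k k') k'k orbT.
Qed.

Section LeafClass.
Variables (X : {set T}) (r u z : T).
Local Notation cut := (cut_off e (tclique_vertices X) X r).
Hypotheses (z_cut : z \in cut u) (u_min : {in cut u, forall y, cut y = set0}).

Let rz : connect (adj_in e X) r z.
Proof. by move: z_cut; rewrite inE => /and3P[]. Qed.

Let zX : z \in X.
Proof.
by move: z_cut; rewrite !inE => /andP[/tlinkedP[K [sKX _ zK _]] _]; apply: (subsetP sKX).
Qed.

Lemma tclass_cut y : y \in tclass X z -> y != u -> y \in cut u.
Proof.
rewrite inE => zy yu; have [<- // | zy'] := eqVneq z y.
have zy_adj := tlinked_adj_in zy zy'.
move: z_cut; rewrite !inE => /andP[_ /and3P[_ zu not_rz]].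
rewrite (tlinked_refl zy) (connect_trans rz (connect1 zy_adj)) yu /=.
apply: contra not_rz => ry; apply: connect_trans ry (connect1 _).
by case/and3P: zy_adj => zy_e _ yX; rewrite /= e_sym zy_e !inE yu zu yX zX.
Qed.

Lemma tclass_clique : clique e (tclass X z).
Proof.
apply/cliqueP => a b; rewrite !inE => za zb.
have [<- | az] := eqVneq z a; first by move/(tlinked_adj_in zb)/and3P => [].
have [<- _ | bz ab] := eqVneq z b.
  by rewrite e_sym; case/and3P: (tlinked_adj_in za az).
apply: (noncut_simplicial e_sym e_irr e_block rz (u_min z_cut)) ab; rewrite ?inE.
- exact: tlinked_refl za.
- exact: tlinked_refl zb.
- exact: tlinked_adj_in za az.
- exact: tlinked_adj_in zb bz.
Qed.

Lemma tclass_closed y K : y \in tclass X z -> y != u ->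
  K \subset X -> tclique K -> y \in K -> K \subset tclass X z.
Proof.
move=> zy yu sKX K_tcl yK; have y_cut := tclass_cut zy yu.
move: (y_cut) zy; rewrite !inE => /andP[_ /and3P[ry _ _]] zy.
apply/subsetP => k kK; rewrite inE; apply: (tlinked_extend sKX K_tcl zX _ kK) => k' k'K k'z.
have yk' : tlinked X y k' by apply/tlinkedP; exists K.
have [zy_eq | zy'] := eqVneq z y.
  by rewrite zy_eq eq_sym in k'z *; case/and3P: (tlinked_adj_in yk' k'z).
have [-> | k'y] := eqVneq k' y; first by case/and3P: (tlinked_adj_in zy zy').
apply: (noncut_simplicial e_sym e_irr e_block ry (u_min y_cut)); rewrite ?inE.
- by move: z_cut; rewrite !inE => /andP[].
- exact: tlinked_refl yk'.
- by apply: tlinked_adj_in; [rewrite tlinkedC | rewrite eq_sym].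
- by apply: tlinked_adj_in; rewrite // eq_sym.
- by rewrite eq_sym.
Qed.

End LeafClass.

(* [u] cuts off a minimal nonempty set of t-clique vertices from a root [r], so
   a vertex [z] it cuts off is no cut vertex: its t-class is a leaf block of the
   t-cliques of G[X], attached to the rest at [u] only. *)
Lemma exists_leaf_tclass X K0 : K0 \subset X -> tclique K0 ->
  exists z u, [/\ z \in tclique_vertices X, clique e (tclass X z) &
    forall y K, y \in tclass X z -> y != u -> K \subset X -> tclique K -> y \in K ->
      K \subset tclass X z].
Proof.
move=> sK0X K0_tcl.
have [r [r' [rK0 r'K0 rr']]] : exists r r', [/\ r \in K0, r' \in K0 & r != r'].
  by apply/card_gt1P; case/andP: K0_tcl => /eqP ->.
have tl_r_r' : tlinked X r r' by apply/tlinkedP; exists K0.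
have r_cuts : cut_off e (tclique_vertices X) X r r != set0.
  apply/set0Pn; exists r'; rewrite !inE (tlinked_refl tl_r_r') eq_sym rr' /=.
  rewrite (connect1 (tlinked_adj_in tl_r_r' rr')) /=.
  apply/negP => /connect_adj_in_out; rewrite !inE eqxx => /(_ isT) /eqP.
  by rewrite eq_sym (negbTE rr').
have [u [/set0Pn[z z_cut] u_min]] := exists_minimal_cut r_cuts.
exists z, u; split; first by move: z_cut; rewrite inE => /andP[].
  exact: tclass_clique z_cut u_min.
by move=> y K; apply: (tclass_closed z_cut u_min).
Qed.

End TCliques.

Section Shellings.
Variable T : finType.
Implicit Types (D : {set {set T}}) (A F G : {set T}) (s : seq {set T}) (x : T).

Definition is_shelling s : Prop :=
  forall i j, i < j -> j < size s ->
    exists2 v, v \in nth set0 s j :\: nth set0 s i &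
      exists2 l, l < j & nth set0 s j :\: nth set0 s l = [set v].

Lemma facetsP D F :
  reflect (F \in D /\ forall G, G \in D -> F \subset G -> G = F) (F \in facets D).
Proof.
rewrite inE; apply: (iffP andP) => [[FD /forall_inP F_max] | [FD F_max]]; split => //.
  by move=> G GD FG; apply/eqP; move/implyP: (F_max G GD); apply.
by apply/forall_inP => G GD; apply/implyP => FG; rewrite (F_max G GD FG).
Qed.

Lemma facet_exists D A : A \in D -> exists2 F, F \in facets D & A \subset F.
Proof.
move=> AD; have A_ok : (A \in D) && (A \subset A) by rewrite AD subxx.
case: (@arg_maxnP _ A (fun G => (G \in D) && (A \subset G)) (fun G => #|G|) A_ok).
move=> F /andP[FD AF] F_max; exists F => //; apply/facetsP; split => // G GD FG.
apply/eqP; rewrite eq_sym eqEcard FG /=; apply: F_max.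
by rewrite GD (subset_trans AF FG).
Qed.

Lemma simplex_shellable D : is_simplex D -> shellable D.
Proof.
case=> [-> | [F ->]].
  exists [::]; split => //.
  suff -> : facets set0 = set0 :> {set {set T}} by rewrite enum_set0.
  by apply/setP => G; rewrite !inE.
exists [:: F]; split; last by move=> i j ij /=; lia.
suff -> : facets (powerset F) = [set F] by rewrite enum_set1.
apply/setP => G; rewrite in_set1; apply/facetsP/eqP => [[GF G_max] | ->].
  by apply: esym (G_max F _ _); [rewrite powersetE | rewrite -powersetE].
split; first by rewrite powersetE.
by move=> H; rewrite powersetE => HF FH; apply/eqP; rewrite eqEsubset HF.
Qed.

Lemma is_shelling_map_setU1 x s :
  {in s, forall G, x \notin G} -> is_shelling s -> is_shelling [seq x |: G | G <- s].
Proof.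
move=> x_notin s_sh i j ij; rewrite size_map => js.
have setU1D (H A : {set T}) : H \in s -> (x |: H) :\: (x |: A) = H :\: A.
  move=> Hs; apply/setP => k; rewrite !inE.
  by case: eqVneq => [-> | //] /=; rewrite (negbTE (x_notin H Hs)) andbF.
have [v vji [l lj E]] := s_sh i j ij js.
exists v; first by rewrite !(nth_map set0) ?(ltn_trans ij) // setU1D // mem_nth.
exists l => //; rewrite !(nth_map set0) ?(ltn_trans lj) // setU1D //.
exact: mem_nth.
Qed.

Lemma is_shelling_cat s1 s2 : is_shelling s1 -> is_shelling s2 ->
  {in s2, forall G, exists2 v, {in s1, forall F, v \notin F} &
     exists2 F, F \in s1 & G :\: F = [set v]} ->
  is_shelling (s1 ++ s2).
Proof.
move=> s1_sh s2_sh attach i j ij; rewrite size_cat => js.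
have [j1 | j1] := ltnP j (size s1).
  have i1 : i < size s1 := ltn_trans ij j1.
  have [v vji [l lj E]] := s1_sh i j ij j1.
  exists v; first by rewrite !nth_cat i1 j1.
  by exists l => //; rewrite !nth_cat j1 (ltn_trans lj j1).
have j2 : j - size s1 < size s2 by lia.
have [i1 | i1] := ltnP i (size s1).
  have [v v_notin [F Fs1 E]] := attach _ (mem_nth set0 j2).
  have vG : v \in nth set0 s2 (j - size s1) by move: (set11 v); rewrite -E => /setDP[].
  exists v; first by rewrite !nth_cat i1 ltnNge j1 /= inE vG v_notin ?mem_nth.
  exists (index F s1); first by apply: leq_trans j1; rewrite index_mem.
  by rewrite !nth_cat index_mem Fs1 ltnNge j1 nth_index.
have [v vji [l lj E]] := s2_sh (i - size s1) (j - size s1) ltac:(lia) j2.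
exists v; first by rewrite !nth_cat !ltnNge i1 j1.
exists (size s1 + l); first by lia.
by rewrite !nth_cat ltnNge j1 ltnNge leq_addr addKn.
Qed.

Lemma in_deletion1 D x A : (A \in deletion D [set x]) = (A \in D) && (x \notin A).
Proof. by rewrite inE disjoint_sym disjoints1. Qed.

Lemma in_link1 D x A : (A \in link D [set x]) = (x \notin A) && (x |: A \in D).
Proof. by rewrite inE disjoint_sym disjoints1 setUC. Qed.

Lemma shedding_vertexP D x :
  shedding_face D [set x] <->
  [set x] \in D /\ forall A, A \in D -> x \in A -> exists2 w, w \notin A & (w |: A) :\ x \in D.
Proof.
split=> -[xD shed]; split => // A AD.
  by rewrite -sub1set => xA; apply: shed => //; apply: set11.
by rewrite sub1set => xA v /set1P ->; apply: shed.
Qed.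

Section SheddingVertex.
Variables (D : {set {set T}}) (x : T).
Hypothesis x_shed : shedding_face D [set x].

Lemma shedding_vertex_swap A :
  A \in D -> x \in A -> exists2 w, w \notin A & (w |: A) :\ x \in D.
Proof. by have [_] := (shedding_vertexP D x).1 x_shed; apply. Qed.

Lemma facets_deletion_shed F : F \in facets (deletion D [set x]) -> F \in facets D.
Proof.
case/facetsP; rewrite in_deletion1 => /andP[FD xF] F_max.
apply/facetsP; split => // G GD FG; have [xG | xG] := boolP (x \in G); last first.
  by apply: F_max; rewrite // in_deletion1 GD.
have [w wG wGD] := shedding_vertex_swap GD xG.
have wF : w \in F.
  rewrite -(F_max ((w |: G) :\ x)) ?in_deletion1 ?wGD ?setD11 //.
    by rewrite !inE eqxx andbT; apply: contraNneq wG => ->.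
  apply/subsetP => k kF; rewrite !inE (subsetP FG) ?orbT // andbT.
  by apply: contraNneq xF => <-.
by rewrite (subsetP FG) in wG.
Qed.

Lemma facets_link G : G \in facets (link D [set x]) -> x |: G \in facets D.
Proof.
case/facetsP; rewrite in_link1 => /andP[xG xGD] G_max.
apply/facetsP; split => // F FD xGF.
have xF : x \in F by apply: (subsetP xGF); apply: setU11.
suff <- : F :\ x = G by rewrite setD1K.
apply: G_max; first by rewrite in_link1 setD11 setD1K.
apply/subsetP => k kG; rewrite !inE (subsetP xGF) ?inE ?kG ?orbT // andbT.
by apply: contraNneq xG => <-.
Qed.

Lemma facets_split F : F \in facets D ->
  if x \in F then F :\ x \in facets (link D [set x]) else F \in facets (deletion D [set x]).
Proof.
case/facetsP => FD F_max; case: ifPn => xF; apply/facetsP; split.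
- by rewrite in_link1 setD11 setD1K.
- move=> G; rewrite in_link1 => /andP[xG xGD] FxG.
  suff E : x |: G = F by rewrite -E setU1K.
  apply: F_max xGD _; apply/subsetP => k kF; rewrite !inE.
  by case: eqVneq => //= kx; rewrite (subsetP FxG) // !inE kx.
- by rewrite in_deletion1 FD.
- by move=> G; rewrite in_deletion1 => /andP[GD _]; apply: F_max.
Qed.

Lemma shedding_vertex_shellable :
  shellable (deletion D [set x]) -> shellable (link D [set x]) -> shellable D.
Proof.
move=> [s1 [s1_perm s1_sh]] [s2 [s2_perm s2_sh]].
have s1E F : (F \in s1) = (F \in facets (deletion D [set x])).
  by rewrite (perm_mem s1_perm) mem_enum.
have s2E G : (G \in s2) = (G \in facets (link D [set x])).
  by rewrite (perm_mem s2_perm) mem_enum.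
have x_notin1 : {in s1, forall F, x \notin F}.
  by move=> F; rewrite s1E => /facetsP[]; rewrite in_deletion1 => /andP[].
have x_notin2 : {in s2, forall G, x \notin G}.
  by move=> G; rewrite s2E => /facetsP[]; rewrite in_link1 => /andP[].
exists (s1 ++ [seq x |: G | G <- s2]); split.
  apply: uniq_perm; last 1 first.
  - move=> F; rewrite mem_cat mem_enum s1E; apply/idP/idP.
      case/orP => [/facets_deletion_shed // | /mapP[G Gs2 ->]].
      by apply: facets_link; rewrite -s2E.
    move/facets_split; case: ifP => xF F_facet; last by rewrite F_facet.
    by apply/orP; right; apply/mapP; exists (F :\ x); rewrite ?s2E ?setD1K.
  - rewrite cat_uniq (perm_uniq s1_perm) enum_uniq /=; apply/andP; split.
      by apply/hasPn => _ /mapP[G _ ->]; apply/negP => /x_notin1; rewrite setU11.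
    rewrite map_inj_in_uniq ?(perm_uniq s2_perm) ?enum_uniq // => G1 G2 G1s G2s E.
    by rewrite -(setU1K (x_notin2 _ G1s)) E setU1K // x_notin2.
  - exact: enum_uniq.
apply: is_shelling_cat s1_sh (is_shelling_map_setU1 x_notin2 s2_sh) _.
move=> _ /mapP[G Gs2 ->]; exists x => //.
have xGD : x |: G \in D by move: Gs2; rewrite s2E => /facetsP[]; rewrite in_link1 => /andP[].
have [w wxG wD] := shedding_vertex_swap xGD (setU11 x G).
have [F F_facet sub] := @facet_exists (deletion D [set x]) ((w |: (x |: G)) :\ x)
  ltac:(by rewrite in_deletion1 wD setD11).
exists F; first by rewrite s1E.
apply/setP => k; rewrite !inE; case: eqVneq => [-> | kx] /=.
  by rewrite x_notin1 ?s1E.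
apply/negP => /andP[/negP kF kG]; apply: kF; apply: (subsetP sub).
by rewrite !inE kx kG !orbT.
Qed.

End SheddingVertex.

Inductive vertex_decomposable : {set {set T}} -> Prop :=
| vdec_simplex D : is_simplex D -> vertex_decomposable D
| vdec_shed D x : shedding_face D [set x] ->
    vertex_decomposable (deletion D [set x]) -> vertex_decomposable (link D [set x]) ->
    vertex_decomposable D.

Lemma vertex_decomposable_k_decomposable k D :
  vertex_decomposable D -> k_decomposable k D.
Proof.
elim=> {D} [D D_simplex | D x x_shed _ IHdel _ IHlink]; first exact: kdec_simplex.
by apply: kdec_shed x_shed _ IHdel IHlink; rewrite cards1.
Qed.

Lemma vertex_decomposable_shellable D : vertex_decomposable D -> shellable D.
Proof.
elim=> {D} [D | D x x_shed _ IHdel _ IHlink]; first exact: simplex_shellable.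
exact: shedding_vertex_shellable x_shed IHdel IHlink.
Qed.

End Shellings.

Section CFLinks.
Variables (T : finType) (e : rel T) (t : nat).
Implicit Types (W S A B K Q : {set T}) (x y : T).

Lemma CFP A : reflect (forall K, K \subset A -> tclique e t K -> False) (A \in CF e t).
Proof.
rewrite inE; apply: (iffP negP) => [A_free K sKA K_tcl | A_free].
  by apply: A_free; apply/existsP; exists K; rewrite sKA.
by case/existsP => K /and3P[sKA K_card K_cl]; apply: (A_free K sKA); apply/andP.
Qed.

Lemma CFPn A : reflect (exists2 K : {set T}, K \subset A & tclique e t K) (A \notin CF e t).
Proof.
rewrite inE negbK; apply: (iffP existsP) => [[K /and3P[sKA K_card K_cl]] | [K sKA K_tcl]].
  by exists K => //; apply/andP.
by exists K; rewrite sKA.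
Qed.

Lemma CF_subset A B : A \subset B -> B \in CF e t -> A \in CF e t.
Proof. by move=> sAB /CFP B_free; apply/CFP => K sKA; apply/B_free/(subset_trans sKA). Qed.

(* The link of the face [S] in CF_t(G[W :|: S]). *)
Definition CF_link W S := [set A : {set T} | (A \subset W) && (A :|: S \in CF e t)].

Lemma in_CF_link W S A : (A \in CF_link W S) = (A \subset W) && (A :|: S \in CF e t).
Proof. by rewrite inE. Qed.

Lemma CF_link_full W S : W :|: S \in CF e t -> CF_link W S = powerset W.
Proof.
move=> WS_CF; apply/setP => A; rewrite in_CF_link powersetE.
by apply/andb_idr => sAW; apply: CF_subset WS_CF; apply: setSU.
Qed.

Lemma CF_link_ghost W S x : x |: S \notin CF e t -> CF_link W S = CF_link (W :\ x) S.
Proof.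
move=> xS_nCF; apply/setP => A; rewrite !in_CF_link subsetD1.
have [xA | xA] := boolP (x \in A); last by rewrite andbT.
rewrite andbF /=; apply/negbTE; apply: contraNN xS_nCF => /andP[_].
by apply: CF_subset; apply: setSU; rewrite sub1set.
Qed.

Lemma CF_link_deletion W S x : deletion (CF_link W S) [set x] = CF_link (W :\ x) S.
Proof. by apply/setP => A; rewrite in_deletion1 !in_CF_link subsetD1 andbAC. Qed.

Lemma CF_link_link W S x :
  x \in W -> link (CF_link W S) [set x] = CF_link (W :\ x) (x |: S).
Proof.
move=> xW; apply/setP => A; rewrite in_link1 !in_CF_link subsetD1 subUset sub1set xW /=.
by rewrite setUA [A :|: _]setUC andbCA andbA.
Qed.

(* A face through [x] trades [x] for a vertex [y] of [Q] it misses: a t-clique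
   created by [y] lies in [Q], so trading [y] back for [x] yields one in the
   original face. *)
Lemma CF_link_shedding W S Q K0 x : [disjoint W & S] -> x |: S \in CF e t ->
  clique e Q -> x \in Q :&: W -> K0 \subset Q -> K0 \subset W :|: S -> tclique e t K0 ->
  (forall y K, y \in Q :&: W -> y != x -> K \subset W :|: S -> tclique e t K ->
     y \in K -> K \subset Q) ->
  shedding_face (CF_link W S) [set x].
Proof.
move=> dWS xS_CF Q_cl xQW sK0Q sK0X K0_tcl Q_free.
have /setIP[xQ xW] := xQW; have xS : x \notin S by rewrite (disjointFr dWS xW).
apply/shedding_vertexP; split; first by rewrite inE sub1set xW.
move=> tau; rewrite in_CF_link => /andP[tauW tau_CF] x_tau.
have [y] : exists2 y, y \in (Q :&: W) :\ x & y \notin tau.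
  apply/subsetPn; apply/negP => sQWtau; move/CFP: tau_CF => /(_ K0); apply=> //.
  apply/subsetP => k kK0; move: (subsetP sK0X k kK0); rewrite !inE => /orP[kW | ->].
    have [-> | kx] := eqVneq k x; first by rewrite x_tau.
    by rewrite (subsetP sQWtau) // !inE kx (subsetP sK0Q) ?kW.
  by rewrite orbT.
rewrite !inE => /andP[yx /andP[yQ yW]] y_tau; exists y => //.
have sBtauS B : B \subset (y |: tau) :\ x :|: S -> y \notin B -> B \subset tau :|: S.
  move=> sB yB; apply/subsetP => k kB; move: (subsetP sB k kB); rewrite !inE.
  by case/orP => [/andP[_ /predU1P[ky | ->]] | ->]; rewrite ?orbT //; rewrite -ky kB in yB.
rewrite inE; apply/andP; split.
  apply/subsetP => k; rewrite !inE => /andP[_ /predU1P[-> // | /(subsetP tauW)]] //.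
apply/CFP => B sB B_tcl; move/CFP: tau_CF => tau_free.
have [yB | yB] := boolP (y \in B); last exact: tau_free B (sBtauS B sB yB) B_tcl.
have sBX : B \subset W :|: S.
  apply: subset_trans sB _; rewrite subUset subsetUr andbT.
  by apply: subset_trans (subD1set _ _) _; rewrite subUset sub1set !inE yW /= subsetU ?tauW.
have sBQ := Q_free y B ltac:(by rewrite inE yQ yW) yx sBX B_tcl yB.
have xB : x \notin B.
  by apply: contraNN xS => /(subsetP sB); rewrite !inE eqxx.
case/andP: B_tcl => /eqP B_card _.
apply: (tau_free (x |: (B :\ y))).
  rewrite subUset sub1set inE x_tau /= (sBtauS (B :\ y)) //; last by rewrite !inE eqxx.
  exact: subset_trans (subD1set _ _) sB.
rewrite /tclique cardsU1 !inE (negbTE xB) andbF -B_card (cardsD1 y B) yB eqxx /=.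
apply: clique_subset Q_cl; rewrite subUset sub1set xQ.
exact: subset_trans (subD1set _ _) sBQ.
Qed.

End CFLinks.

Section BlockGraphCF.
Variables (T : finType) (e : rel T) (t : nat).
Hypotheses (e_sym : symmetric e) (e_irr : irreflexive e) (e_block : block_graph e).
Hypothesis t_gt1 : 1 < t.
Implicit Types (W S : {set T}).

Lemma CF_link_shedding_vertex W S : [disjoint W & S] -> S \in CF e t ->
  {in W, forall x, x |: S \in CF e t} -> W :|: S \notin CF e t ->
  exists2 x, x \in W & shedding_face (CF_link e t W S) [set x].
Proof.
move=> dWS S_CF W_CF /CFPn[K0 sK0X K0_tcl].
have [z [u [zz Q_cl Q_free]]] := exists_leaf_tclass e_sym e_irr e_block t_gt1 sK0X K0_tcl.
set Q := tclass e t (W :|: S) z in Q_cl Q_free *.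
have /tlinkedP[K [sKX K_tcl zK _]] : tlinked e t (W :|: S) z z by rewrite inE in zz.
have sKQ : K \subset Q by apply/subsetP => k kK; rewrite inE; apply/tlinkedP; exists K.
have [w wK wS] : exists2 w, w \in K & w \notin S.
  by apply/subsetPn; apply: contraTN S_CF => sKS; apply/CFPn; exists K.
have wQW : w \in Q :&: W.
  by rewrite inE (subsetP sKQ) //=; move: (subsetP sKX w wK); rewrite inE (negbTE wS) orbF.
pose x := if u \in Q :&: W then u else w.
have xQW : x \in Q :&: W by rewrite /x; case: ifP.
have /setIP[_ xW] := xQW.
exists x => //; apply: CF_link_shedding dWS (W_CF x xW) Q_cl xQW sKQ sKX K_tcl _.
move=> y K' /setIP[yQ yW] yx; apply: Q_free => //.
move: yx; rewrite /x; case: ifP => [_ // | uQW _].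
by apply: contraFneq _ uQW => <-; rewrite inE yQ.
Qed.

Lemma CF_link_vertex_decomposable W S : [disjoint W & S] -> S \in CF e t ->
  vertex_decomposable (CF_link e t W S).
Proof.
have [n] := ubnP #|W|; elim: n W S => // n IHn W S W_lt dWS S_CF.
have [WS_CF | WS_nCF] := boolP (W :|: S \in CF e t).
  by apply: vdec_simplex; right; exists W; apply: CF_link_full.
have W_lt' x : x \in W -> #|W :\ x| < n.
  by move=> xW; rewrite (cardsD1 x W) xW in W_lt.
have dWS' x : [disjoint W :\ x & S] by apply: disjointWl dWS; apply: subD1set.
have [/exists_inP[x xW xS_nCF] | /exists_inPn W_CF] :=
  boolP [exists x in W, x |: S \notin CF e t].
  by rewrite (CF_link_ghost W xS_nCF); apply: IHn; rewrite ?W_lt'.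
have {}W_CF : {in W, forall x, x |: S \in CF e t} by move=> x /W_CF/negbNE.
have [x xW x_shed] := CF_link_shedding_vertex dWS S_CF W_CF WS_nCF.
apply: (vdec_shed x_shed); rewrite ?CF_link_deletion ?CF_link_link //.
  by apply: IHn; rewrite ?W_lt'.
apply: IHn; rewrite ?W_lt' ?W_CF //.
rewrite disjoints_subset; apply/subsetP => k; rewrite !inE => /andP[kx kW].
by rewrite negb_or kx (disjointFr dWS kW).
Qed.

End BlockGraphCF.

Theorem corollary3p4 (T : finType) (e : rel T) (e_sym : symmetric e)
  (e_irr : irreflexive e) (t : nat) (ht : 3 <= t) (hG : block_graph e) :
  k_decomposable (t - 2) (CF e t) /\ shellable (CF e t).
Proof.
have t_gt1 : 1 < t by apply: leq_trans ht.
have CF_full : CF e t = CF_link e t setT set0.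
  by apply/setP => A; rewrite in_CF_link subsetT setU0.
have empty_CF : set0 \in CF e t.
  apply/CFP => K; rewrite subset0 => /eqP -> /andP[]; rewrite cards0 => /eqP t0.
  by rewrite -t0 in t_gt1.
have : vertex_decomposable (CF e t).
  rewrite CF_full; apply: CF_link_vertex_decomposable => //.
  by rewrite disjoints_subset setC0 subsetT.
by split; [apply: vertex_decomposable_k_decomposable | apply: vertex_decomposable_shellable].
Qed.
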